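(* Let $(c_i)_{i\ge0}$, $(b'_i)_{i\ge0}$, $(c'_i)_{i\ge0}$ be sequences of non-negative reals and let $L,R>0$ and $0<\epsilon<1$. Suppose that for all $i$: $b'_{i+1}\le b'_i+L(b'_ic_i+c'_i)$, $c'_{i+1}\le L(b'_ic_i+c'_i)c_i$, $c_{i+1}\le Rc_i^2$, and $c_i\le c'_i$; and that there is an index $I$ with $c_i\le\epsilon^{2^{(i-I)}}$ for all $i\ge I$. Then: (a) $(b'_i)$ is bounded; (b) there is $R'>0$ with $c'_{i+1}\le R'(c'_i)^2$ for all $i$; (c) there is an index $I'\ge I$ with $c'_i\le\epsilon^{2^{(i-I')}}$ for all $i\ge I'$. *)

From Stdlib Require Import Reals Lra Lia.

(** The combination [b'_i + 2 L c'_i] grows at most by the factor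
    [1 + 2 L c_i] per step, and [c_i] eventually decays geometrically with a
    small ratio, so the product of these factors converges and [b'] stays
    bounded.  With a bound [B] on [b'] and [c_i <= c'_i], the recursion for [c']
    becomes quadratic, [c'_{i+1} <= L (B + 1) c'_i^2]; since
    [c'_{i+1} <= L (B + 1) c'_i c_i] and [c_i -> 0], some [c'_J] falls below
    [eps / max(1, L (B + 1))], from where squaring yields the doubly exponential
    decay. *)

From Stdlib Require Import Reals Lra Lia.
Open Scope R_scope.

Lemma pow_in_unit_interval (x : R) (n : nat) : 0 <= x <= 1 -> 0 <= x ^ n <= 1.
Proof.
  intros Hx. split; [apply pow_le | rewrite <- (pow1 n); apply pow_incr]; lra.
Qed.

Lemma pow_antimono_le1 (x : R) (m n : nat) :
  0 <= x <= 1 -> (m <= n)%nat -> x ^ n <= x ^ m.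
Proof.
  intros Hx Hmn. replace n with (m + (n - m))%nat by lia. rewrite pow_add.
  assert (0 <= x ^ m) by (apply pow_le; lra).
  pose proof (pow_in_unit_interval x (n - m) Hx). nra.
Qed.

Lemma pow_two_pow_le (x : R) (k : nat) : 0 <= x <= 1 -> x ^ (2 ^ k) <= x ^ k.
Proof.
  intros Hx. apply pow_antimono_le1; [exact Hx|].
  pose proof (Nat.pow_gt_lin_r 2 k). lia.
Qed.

Lemma exists_pow_lt (x d : R) : 0 <= x < 1 -> 0 < d -> exists m, x ^ m < d.
Proof.
  intros Hx Hd.
  destruct (pow_lt_1_zero x ltac:(rewrite Rabs_right; lra) d Hd) as [m Hm].
  exists m. specialize (Hm m (le_n m)).
  rewrite Rabs_right in Hm; [exact Hm | apply Rle_ge, pow_le; lra].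
Qed.

Lemma bounded_of_eventually_bounded (f : nat -> R) (N : nat) (B : R) :
  (forall n, f (N + n)%nat <= B) -> exists B', forall i, f i <= B'.
Proof.
  revert B. induction N as [|N IH]; intros B HB; [exists B; exact HB|].
  apply (IH (Rmax B (f N))). intros [|n].
  - rewrite Nat.add_0_r. apply Rmax_r.
  - rewrite Nat.add_succ_r. eapply Rle_trans; [apply (HB n) | apply Rmax_l].
Qed.

Lemma le_twice_of_geometric_growth (z : nat -> R) (a q : R) :
  0 <= a -> 0 <= q <= 1 -> 2 * a <= 1 - q ->
  (forall n, 0 <= z n) -> (forall n, z (S n) <= (1 + a * q ^ n) * z n) ->
  forall n, z n <= 2 * z 0%nat.
Proof.
  intros Ha Hq Haq Hz Hgrowth.
  (* [(1 + a x) (2 - x) <= 2 - q x] for [0 <= x <= 1], as [2 a <= 1 - q]. *)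
  assert (Hinv : forall n, z n <= (2 - q ^ n) * z 0%nat).
  { induction n as [|n IH]; [simpl; lra|].
    pose proof (pow_in_unit_interval q n Hq) as Hqn.
    pose proof (Hz n). pose proof (Hz 0%nat). simpl.
    assert ((1 + a * q ^ n) * z n <= (1 + a * q ^ n) * ((2 - q ^ n) * z 0%nat))
      by (apply Rmult_le_compat_l; nra).
    assert ((1 + a * q ^ n) * (2 - q ^ n) <= 2 - q * q ^ n) by nra.
    specialize (Hgrowth n). nra. }
  intro n. pose proof (Hinv n). pose proof (Hz 0%nat).
  assert (0 <= q ^ n) by (apply pow_le; lra). nra.
Qed.

Lemma quadratic_recurrence_le_pow_two_pow (x : nat -> R) (K eps : R) (J : nat) :
  1 <= K -> (forall i, 0 <= x i) -> (forall i, x (S i) <= K * x i ^ 2) ->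
  K * x J <= eps -> forall i, (J <= i)%nat -> x i <= eps ^ (2 ^ (i - J)).
Proof.
  intros HK Hx Hrec HJ.
  assert (Hk : forall k, K * x (J + k)%nat <= eps ^ (2 ^ k)).
  { induction k as [|k IH]; [rewrite Nat.add_0_r; simpl; lra|].
    rewrite Nat.add_succ_r.
    replace (2 ^ S k)%nat with (2 ^ k + 2 ^ k)%nat by (simpl; lia).
    rewrite pow_add.
    pose proof (Hx (J + k)%nat). pose proof (Hrec (J + k)%nat).
    assert (0 <= K * x (J + k)%nat) by nra.
    apply Rle_trans with ((K * x (J + k)%nat) * (K * x (J + k)%nat)); [nra|].
    apply Rmult_le_compat; lra. }
  intros i Hi. replace i with (J + (i - J))%nat at 1 by lia.
  pose proof (Hk (i - J)%nat). pose proof (Hx (J + (i - J))%nat). nra.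
Qed.

Section Lemma5p3.

Variables (c b' c' : nat -> R) (L eps : R) (I : nat).
Hypothesis Hc : forall i, 0 <= c i.
Hypothesis Hb' : forall i, 0 <= b' i.
Hypothesis Hc' : forall i, 0 <= c' i.
Hypothesis HL : 0 < L.
Hypothesis Heps0 : 0 < eps.
Hypothesis Heps1 : eps < 1.
Hypothesis Hb'_step : forall i, b' (S i) <= b' i + L * (b' i * c i + c' i).
Hypothesis Hc'_step : forall i, c' (S i) <= L * (b' i * c i + c' i) * c i.
Hypothesis Hc_le_c' : forall i, c i <= c' i.
Hypothesis Hc_decay : forall i, (I <= i)%nat -> c i <= eps ^ (2 ^ (i - I))%nat.

Let potential i := b' i + 2 * L * c' i.

Lemma potential_nonneg i : 0 <= potential i.
Proof.
  unfold potential. pose proof (Hb' i). pose proof (Hc' i).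
  assert (0 <= 2 * L * c' i) by (apply Rmult_le_pos; lra). lra.
Qed.

Lemma potential_step i :
  2 * L * c i <= 1 -> potential (S i) <= (1 + 2 * L * c i) * potential i.
Proof.
  intros Hsmall. unfold potential.
  pose proof (Hb'_step i). pose proof (Hc'_step i).
  pose proof (Hc i). pose proof (Hb' i). pose proof (Hc' i).
  assert (2 * L * c' (S i) <= 2 * L * (L * (b' i * c i + c' i) * c i))
    by (apply Rmult_le_compat_l; lra).
  assert (0 <= L * b' i * c i * (1 - 2 * L * c i)).
  { apply Rmult_le_pos; [|lra]. repeat apply Rmult_le_pos; lra. }
  assert (0 <= L * c' i * (1 + 2 * L * c i)).
  { apply Rmult_le_pos; [apply Rmult_le_pos|]; nra. }
  nra.
Qed.

Lemma c_le_geometric m n : c (I + m + n)%nat <= eps ^ m * eps ^ n.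
Proof.
  rewrite <- pow_add.
  eapply Rle_trans; [apply Hc_decay; lia|].
  replace (I + m + n - I)%nat with (m + n)%nat by lia.
  apply pow_two_pow_le; lra.
Qed.

Lemma potential_bounded : exists Z, forall i, potential i <= Z.
Proof.
  destruct (exists_pow_lt eps ((1 - eps) / (4 * L)))
    as [m Hm]; [lra | apply Rdiv_lt_0_compat; lra|].
  assert (Hepsm : 0 <= eps ^ m) by (apply pow_le; lra).
  assert (Hsmall : 4 * L * eps ^ m <= 1 - eps).
  { apply Rmult_lt_compat_l with (r := 4 * L) in Hm; [|lra].
    replace (4 * L * ((1 - eps) / (4 * L))) with (1 - eps) in Hm
      by (field; lra). lra. }
  apply (bounded_of_eventually_bounded _ (I + m) (2 * potential (I + m + 0)%nat)).
  apply (le_twice_of_geometric_growth (fun n => potential (I + m + n)%nat)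
           (2 * L * eps ^ m) eps); [nra | lra | lra | |].
  - intro n. apply potential_nonneg.
  - intro n. rewrite Nat.add_succ_r.
    pose proof (c_le_geometric m n) as Hcn.
    assert (Hepsn : 0 <= eps ^ n <= 1) by (apply pow_in_unit_interval; lra).
    assert (H2Lc : 2 * L * c (I + m + n)%nat <= 2 * L * eps ^ m * eps ^ n).
    { replace (2 * L * eps ^ m * eps ^ n) with (2 * L * (eps ^ m * eps ^ n))
        by ring.
      apply Rmult_le_compat_l; lra. }
    eapply Rle_trans; [apply potential_step; nra|].
    apply Rmult_le_compat_r; [apply potential_nonneg | lra].
Qed.

Lemma b'_bounded : exists B, 0 <= B /\ forall i, b' i <= B.
Proof.
  destruct potential_bounded as [Z HZ]. exists Z. unfold potential in HZ.
  assert (Hb'Z : forall i, b' i <= Z).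
  { intro i. pose proof (HZ i). pose proof (Hc' i).
    assert (0 <= 2 * L * c' i) by (apply Rmult_le_pos; lra). lra. }
  split; [apply Rle_trans with (b' 0%nat); [apply Hb' | apply Hb'Z] | exact Hb'Z].
Qed.

Lemma c'_bounded : exists D, 0 <= D /\ forall i, c' i <= D.
Proof.
  destruct potential_bounded as [Z HZ]. exists (Z / (2 * L)). unfold potential in HZ.
  assert (Hc'Z : forall i, c' i <= Z / (2 * L)).
  { intro i. pose proof (HZ i). pose proof (Hb' i).
    apply Rmult_le_reg_l with (2 * L); [lra|].
    replace (2 * L * (Z / (2 * L))) with Z by (field; lra). lra. }
  split; [apply Rle_trans with (c' 0%nat); [apply Hc' | apply Hc'Z] | exact Hc'Z].
Qed.

Lemma c'_step_le B :
  (forall i, b' i <= B) -> forall i, c' (S i) <= L * (B + 1) * c' i * c i.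
Proof.
  intros HB i. eapply Rle_trans; [apply Hc'_step|].
  pose proof (HB i). pose proof (Hc i). pose proof (Hb' i).
  pose proof (Hc' i). pose proof (Hc_le_c' i).
  assert (b' i * c i <= B * c' i) by (apply Rmult_le_compat; lra).
  apply Rmult_le_compat_r; [lra|].
  replace (L * (B + 1) * c' i) with (L * (B * c' i + c' i)) by ring.
  apply Rmult_le_compat_l; lra.
Qed.

Lemma c'_quadratic : exists R', 0 < R' /\ forall i, c' (S i) <= R' * c' i ^ 2.
Proof.
  destruct b'_bounded as [B [HB0 HB]]. exists (L * (B + 1)).
  split; [apply Rmult_lt_0_compat; lra|].
  intro i. eapply Rle_trans; [apply (c'_step_le B HB)|].
  pose proof (Hc_le_c' i). pose proof (Hc i).
  assert (0 <= L * (B + 1) * c' i)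
    by (apply Rmult_le_pos; [apply Rmult_le_pos|apply Hc']; lra).
  simpl. rewrite Rmult_1_r, <- Rmult_assoc.
  apply Rmult_le_compat_l; lra.
Qed.

Lemma c'_eventually_small d : 0 < d -> exists J, (I <= J)%nat /\ c' J <= d.
Proof.
  intros Hd.
  destruct b'_bounded as [B [HB0 HB]]. destruct c'_bounded as [D [HD0 HD]].
  set (K := L * (B + 1) * D).
  assert (HK : 0 <= K) by (unfold K; repeat apply Rmult_le_pos; lra).
  destruct (exists_pow_lt eps (d / (K + 1))) as [m Hm];
    [lra | apply Rdiv_lt_0_compat; lra|].
  exists (S (I + m)). split; [lia|].
  eapply Rle_trans; [apply (c'_step_le B HB)|].
  pose proof (c_le_geometric m 0) as Hcm.
  rewrite Nat.add_0_r, pow_O, Rmult_1_r in Hcm.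
  assert (Hd' : (K + 1) * eps ^ m <= d).
  { apply Rmult_lt_compat_l with (r := K + 1) in Hm; [|lra].
    replace ((K + 1) * (d / (K + 1))) with d in Hm by (field; lra). lra. }
  assert (L * (B + 1) * c' (I + m)%nat <= K).
  { unfold K. apply Rmult_le_compat_l; [apply Rmult_le_pos; lra | apply HD]. }
  assert (0 <= L * (B + 1) * c' (I + m)%nat)
    by (apply Rmult_le_pos; [apply Rmult_le_pos|apply Hc']; lra).
  pose proof (Hc (I + m)%nat).
  assert (0 <= eps ^ m) by (apply pow_le; lra).
  nra.
Qed.

Lemma c'_doubly_exponential :
  exists I', (I <= I')%nat /\
    forall i, (I' <= i)%nat -> c' i <= eps ^ (2 ^ (i - I'))%nat.
Proof.
  destruct c'_quadratic as [R' [HR' Hquad]].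
  set (K := Rmax R' 1).
  assert (HK1 : 1 <= K) by apply Rmax_r.
  assert (HR'K : R' <= K) by apply Rmax_l.
  destruct (c'_eventually_small (eps / K)) as [J [HIJ HJ]];
    [apply Rdiv_lt_0_compat; lra|].
  exists J. split; [exact HIJ|].
  apply (quadratic_recurrence_le_pow_two_pow c' K); [exact HK1 | exact Hc' | |].
  - intro i. eapply Rle_trans; [apply Hquad|].
    apply Rmult_le_compat_r; [apply pow_le, Hc' | exact HR'K].
  - apply Rmult_le_compat_l with (r := K) in HJ; [|lra].
    replace (K * (eps / K)) with eps in HJ by (field; lra). exact HJ.
Qed.

End Lemma5p3.

Theorem lemma5p3 (c b' c' : nat -> R) (L Rc eps : R) (I : nat) :
  (forall i, 0 <= c i) -> (forall i, 0 <= b' i) -> (forall i, 0 <= c' i) ->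
  0 < L -> 0 < Rc -> 0 < eps -> eps < 1 ->
  (forall i, b' (S i) <= b' i + L * (b' i * c i + c' i)) ->
  (forall i, c' (S i) <= L * (b' i * c i + c' i) * c i) ->
  (forall i, c (S i) <= Rc * (c i) ^ 2) ->
  (forall i, c i <= c' i) ->
  (forall i, (I <= i)%nat -> c i <= eps ^ (2 ^ (i - I))%nat) ->
  (exists B, forall i, Rabs (b' i) <= B) /\
  (exists R', 0 < R' /\ forall i, c' (S i) <= R' * (c' i) ^ 2) /\
  (exists I', (I <= I')%nat /\
     forall i, (I' <= i)%nat -> c' i <= eps ^ (2 ^ (i - I'))%nat).
Proof.
  intros Hc Hb' Hc' HL _ Heps0 Heps1 Hb'_step Hc'_step _ Hc_le_c' Hc_decay.
  split; [|split].
  - assert (Hbounded : exists B, 0 <= B /\ forall i, b' i <= B)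
      by (apply (b'_bounded c b' c' L eps I); assumption).
    destruct Hbounded as [B [_ HB]].
    exists B. intro i. rewrite Rabs_right; [apply HB | apply Rle_ge, Hb'].
  - apply (c'_quadratic c b' c' L eps I); assumption.
  - apply (c'_doubly_exponential c b' c' L eps I); assumption.
Qed.
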